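(* Let $u\in(0,1/2)$ and let $f\in L^1(\mu)$ be strictly increasing on $[0,1]$. Then \[\int_u^1 \hat F f\,d\mu<\int_u^1 f\,d\mu;\] more precisely, $\int_u^1 f\,d\mu-\int_u^1\hat F f\,d\mu\ge \bigl(f(\tfrac{1}{1+u})-f(u)\bigr)\log(1+u)$.
   Context: $\mu$ is the measure on $[0,1]$ with $d\mu=dx/x$. $\hat F$ is the transfer operator of the Farey map $F$ (where $F(x)=x/(1-x)$ for $0\le x\le1/2$, $F(x)=(1-x)/x$ for $1/2<x\le1$) with respect to $\mu$, i.e. the positive linear operator on $L^1(\mu)$ with $\int_B\hat Ff\,d\mu=\int_{F^{-1}B}f\,d\mu$ for all Borel $B\subseteq[0,1]$; explicitly $\hat Ff(x)=\dfrac{f(x/(1+x))+x\,f(1/(1+x))}{1+x}$. *)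

From Stdlib Require Import Reals Lra.
Open Scope R_scope.

(* Transfer operator of the Farey map w.r.t. mu = dx/x (explicit formula). *)
Definition Fhat (f : R -> R) (x : R) : R :=
  (f (x / (1 + x)) + x * f (1 / (1 + x))) / (1 + x).

(* Density of the integrand against mu: int_B g dmu = int_B g(x)/x dx. *)
Definition mu_dens (g : R -> R) (x : R) : R := g x / x.

(* f in L^1(mu) on [0,1]: the improper Riemann integral int_0^1 |f(x)|/x dx
   is finite, i.e. |f|/x is Riemann integrable on every [a,1], a in (0,1],
   with uniformly bounded integrals. *)
Definition L1_mu (f : R -> R) : Prop :=
  exists M : R, forall a : R, 0 < a <= 1 ->
    exists pr : Riemann_integrable (mu_dens (fun x => Rabs (f x))) a 1,
      RiemannInt pr <= M.

Definition strictly_increasing_01 (f : R -> R) : Prop :=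
  forall x y, 0 <= x -> x < y -> y <= 1 -> f x < f y.

From Stdlib Require Import Reals Lra ClassicalEpsilon.
From Coquelicot Require Import Coquelicot.
Open Scope R_scope.

(* The two inverse branches x/(1+x) and 1/(1+x) of the Farey map carry [u,1]
   onto [u/(1+u), 1/2] and [1/2, 1/(1+u)], and they do so with Jacobian
   factors that turn dx/x into 1/(x(1+x)) and 1/(1+x); hence
   int_u^1 Fhat f dmu = int_{u/(1+u)}^{1/(1+u)} f dmu.  For u < 1/2 we have
   u/(1+u) < u < 1/(1+u), so the difference of the two sides of the theorem is
   int_{1/(1+u)}^1 f dmu - int_{u/(1+u)}^u f dmu, and monotonicity of f bounds
   these below by f(1/(1+u)) log(1+u) and above by f(u) log(1+u).

   Since f is merely monotone, both the Riemann integrability of f(x) w(x) for a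
   continuous weight w and the change of variables are proved directly: the
   product is squeezed between f(x_k) w and f(x_(k+1)) w on a fine uniform
   partition, and the difference of the two sides of the substitution formula
   has increments bounded by (f(phi t) - f(phi s)) K (t - s), which forces it to
   be constant. *)

Lemma RInt_mult_l (w : R -> R) (a b k : R) :
  ex_RInt w a b -> RInt (fun x => k * w x) a b = k * RInt w a b.
Proof. intro hw. exact (RInt_scal w a b k hw). Qed.

Lemma RInt_Chasles_R (g : R -> R) (a b c : R) :
  ex_RInt g a b -> ex_RInt g b c -> RInt g a b + RInt g b c = RInt g a c.
Proof. exact (RInt_Chasles g a b c). Qed.

Lemma RInt_reflect (g : R -> R) (a b : R) : ex_RInt g (- b) (- a) ->
  ex_RInt (fun x => g (- x)) a b /\ RInt (fun x => g (- x)) a b = RInt g (- b) (- a).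
Proof.
  intros exg. set (I := RInt g (- b) (- a)).
  assert (H1 : is_RInt g (- b) (- a) I)
    by exact (RInt_correct (V := R_CompleteNormedModule) g (- b) (- a) exg).
  assert (H2 : is_RInt g (- a) (- b) (- I)) by exact (is_RInt_swap _ _ _ _ H1).
  assert (H3 : is_RInt (fun x => - g (- x)) a b (- I))
    by exact (is_RInt_comp_opp _ _ _ _ H2).
  assert (H4 : is_RInt (fun x => - - g (- x)) a b (- - I))
    by exact (is_RInt_opp _ _ _ _ H3).
  rewrite Ropp_involutive in H4.
  assert (H : is_RInt (fun x => g (- x)) a b I).
  { apply (is_RInt_ext _ _ _ _ _ (fun x _ => Ropp_involutive (g (- x))) H4). }
  split; [exists I; exact H | exact (is_RInt_unique _ _ _ _ H)].
Qed.

(** * Riemann integrability by squeezing *)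

Definition StepFun_zero (a b : R) : StepFun a b := mkStepFun (StepFun_P4 a b 0).

(* Transparent: [RiemannInt_StepFun] computes the approximating sequence it yields. *)
Definition StepFun_Riemann_integrable {a b : R} (phi : StepFun a b) :
  Riemann_integrable phi a b.
Proof.
  intro eps. exists phi, (StepFun_zero a b). split.
  - intros t _. simpl. unfold fct_cte. rewrite Rminus_diag, Rabs_R0. lra.
  - unfold StepFun_zero. rewrite StepFun_P18, Rmult_0_l, Rabs_R0. apply cond_pos.
Defined.

Lemma RiemannInt_StepFun {a b : R} (phi : StepFun a b) (pr : Riemann_integrable phi a b) :
  RiemannInt pr = RiemannInt_SF phi.
Proof.
  rewrite (RiemannInt_P5 pr (StepFun_Riemann_integrable phi)).
  unfold RiemannInt. destruct (RiemannInt_exists _ RinvN RinvN_cv) as [l Hl].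
  apply (UL_sequence _ _ _ Hl).
  intros e He. exists 0%nat. intros n _. unfold Rdist. simpl.
  rewrite Rminus_diag, Rabs_R0. exact He.
Qed.

Lemma RiemannInt_StepFun_approx (g : R -> R) (a b : R) (pr : Riemann_integrable g a b)
    (phi psi : StepFun a b) :
  a <= b -> (forall t, a <= t <= b -> Rabs (g t - phi t) <= psi t) ->
  Rabs (RiemannInt pr - RiemannInt_SF phi) <= RiemannInt_SF psi.
Proof.
  intros hab happrox.
  pose proof (RiemannInt_P10 (-1) pr (StepFun_Riemann_integrable phi)) as prd.
  rewrite <- (RiemannInt_StepFun phi (StepFun_Riemann_integrable phi)),
          <- (RiemannInt_StepFun psi (StepFun_Riemann_integrable psi)).
  replace (RiemannInt pr - RiemannInt (StepFun_Riemann_integrable phi)) with (RiemannInt prd)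
    by (rewrite (RiemannInt_P13 pr (StepFun_Riemann_integrable phi) prd); ring).
  apply (Rle_trans _ _ _ (RiemannInt_P17 prd (RiemannInt_P16 prd) hab)).
  apply RiemannInt_P19; [exact hab|].
  intros x Hx. replace (g x + -1 * phi x) with (g x - phi x) by ring.
  apply happrox; lra.
Qed.

Definition sandwiched (g : R -> R) (a b eta : R) : Prop :=
  exists l h : R -> R, ex_RInt l a b /\ ex_RInt h a b /\
    (forall x, a <= x <= b -> l x <= g x <= h x) /\ RInt h a b - RInt l a b <= eta.

Lemma ex_RInt_sandwiched (g : R -> R) (a b : R) :
  a <= b -> (forall eta, 0 < eta -> sandwiched g a b eta) -> ex_RInt g a b.
Proof.
  intros hab hsw. apply ex_RInt_Reals_1. intro eps.
  assert (he4 : 0 < eps / 4) by (destruct eps; simpl; lra).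
  destruct (constructive_indefinite_description _ (hsw _ he4)) as [l Hl].
  destruct (constructive_indefinite_description _ Hl) as [h [exl [exh [hlgh hgap]]]].
  pose proof (ex_RInt_minus h l a b exh exl) as exd.
  pose (prd := ex_RInt_Reals_0 (fun x => h x - l x) a b exd).
  destruct (ex_RInt_Reals_0 l a b exl (mkposreal _ he4)) as [phi1 [psi1 [H1 I1]]].
  destruct (prd (mkposreal _ he4)) as [phi2 [psi2 [H2 I2]]].
  rewrite Rmin_left, Rmax_right in H1, H2 by lra.
  simpl in I1, I2. apply Rabs_def2 in I1. apply Rabs_def2 in I2.
  (* [|g - phi1| <= |g - l| + |l - phi1| <= (h - l) + psi1 <= phi2 + psi2 + psi1] *)
  assert (Hpt : forall t, a <= t <= b ->
      Rabs (g t - phi1 t) <= psi1 t + 1 * (phi2 t + 1 * psi2 t)).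
  { intros t Ht. specialize (H1 t Ht). specialize (H2 t Ht). specialize (hlgh t Ht).
    apply Rabs_le_between in H1. apply Rabs_le_between in H2.
    apply Rabs_le_between. lra. }
  pose proof (RiemannInt_StepFun_approx _ _ _ prd phi2 psi2 hab H2) as Hd.
  assert (Hhl : RInt (fun x => h x - l x) a b = RInt h a b - RInt l a b)
    by exact (RInt_minus h l a b exh exl).
  rewrite <- (RInt_Reals _ _ _ prd), Hhl in Hd.
  apply Rabs_le_between' in Hd.
  pose (psi := mkStepFun (StepFun_P28 1 psi1 (mkStepFun (StepFun_P28 1 phi2 psi2)))).
  assert (Hpsi : 0 <= RiemannInt_SF psi).
  { replace 0 with (RiemannInt_SF (StepFun_zero a b))
      by (unfold StepFun_zero; rewrite StepFun_P18; ring).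
    apply StepFun_P37; [exact hab|].
    intros x Hx. simpl. unfold fct_cte.
    apply Rle_trans with (Rabs (g x - phi1 x)); [apply Rabs_pos | apply Hpt; lra]. }
  exists phi1, psi. split.
  - rewrite Rmin_left, Rmax_right by lra. exact Hpt.
  - unfold psi in *. rewrite Rabs_pos_eq by exact Hpsi. rewrite !StepFun_P30. lra.
Qed.

(** * Monotone integrands *)

Definition nondecreasing_on (m : R -> R) (a b : R) : Prop :=
  forall x y, a <= x -> x <= y -> y <= b -> m x <= m y.

Lemma nondecreasing_on_sub (m : R -> R) (a b s t : R) :
  a <= s -> t <= b -> nondecreasing_on m a b -> nondecreasing_on m s t.
Proof. intros has htb hm x y hx hxy hy. apply hm; lra. Qed.

Section UniformRefinement.

Variable Q : R -> R -> R -> Prop.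
Hypothesis Q_point : forall s, Q s s 0.
Hypothesis Q_concat : forall s c t e1 e2,
  s <= c -> c <= t -> Q s c e1 -> Q c t e2 -> Q s t (e1 + e2).
Hypothesis Q_weaken : forall s t e e', e <= e' -> Q s t e -> Q s t e'.

Variables (m : R -> R) (a b K : R).
Hypothesis hab : a <= b.
Hypothesis hK : 0 <= K.
Hypothesis m_nondecr : nondecreasing_on m a b.
Hypothesis Q_local : forall s t, a <= s -> s <= t -> t <= b ->
  Q s t ((m t - m s) * K * (t - s)).

Lemma Q_equal_steps (d : R) (n : nat) : 0 <= d -> a + INR n * d <= b ->
  Q a (a + INR n * d) ((m (a + INR n * d) - m a) * K * d).
Proof.
  intros hd. induction n as [|n IH]; intro hn.
  - replace (a + INR 0 * d) with a by (simpl; ring).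
    replace ((m a - m a) * K * d) with 0 by ring. apply Q_point.
  - rewrite S_INR in *.
    assert (hn' : a + INR n * d <= b) by (pose proof (pos_INR n); nra).
    assert (h0 : a <= a + INR n * d) by (pose proof (pos_INR n); nra).
    replace ((m (a + (INR n + 1) * d) - m a) * K * d) with
      ((m (a + INR n * d) - m a) * K * d +
       (m (a + (INR n + 1) * d) - m (a + INR n * d)) * K *
         ((a + (INR n + 1) * d) - (a + INR n * d))) by ring.
    apply Q_concat with (c := a + INR n * d); [lra | lra | apply IH, hn' |].
    apply Q_local; lra.
Qed.

Lemma Q_arbitrarily_small (eta : R) : 0 < eta -> Q a b eta.
Proof.
  intros heta.
  assert (hm : 0 <= m b - m a) by (pose proof (m_nondecr a b); lra).
  set (C := (m b - m a) * K * (b - a)).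
  assert (hC : 0 <= C) by (apply Rmult_le_pos; [apply Rmult_le_pos|]; lra).
  destruct (INR_unbounded (C / eta)) as [N hN].
  assert (hNpos : 0 < INR N)
    by (apply Rle_lt_trans with (C / eta); [apply Rdiv_le_0_compat|]; lra).
  set (d := (b - a) / INR N).
  assert (hd : 0 <= d) by (apply Rdiv_le_0_compat; lra).
  assert (hNd : a + INR N * d = b) by (unfold d; field; lra).
  pose proof (Q_equal_steps d N hd ltac:(lra)) as hQ. rewrite hNd in hQ.
  refine (Q_weaken _ _ _ _ _ hQ).
  replace ((m b - m a) * K * d) with (C / INR N) by (unfold C, d; field; lra).
  assert (hCN : C < eta * INR N).
  { replace C with (eta * (C / eta)) by (field; lra). apply Rmult_lt_compat_l; lra. }
  replace eta with (eta * INR N / INR N) by (field; lra).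
  apply Rmult_le_compat_r; [left; apply Rinv_0_lt_compat|]; lra.
Qed.

End UniformRefinement.

Definition glue (c : R) (f1 f2 : R -> R) (x : R) : R :=
  if Rlt_dec x c then f1 x else f2 x.

Lemma RInt_glue (f1 f2 : R -> R) (s c t : R) : s <= c -> c <= t ->
  ex_RInt f1 s c -> ex_RInt f2 c t ->
  ex_RInt (glue c f1 f2) s t /\ RInt (glue c f1 f2) s t = RInt f1 s c + RInt f2 c t.
Proof.
  intros hsc hct ex1 ex2.
  assert (E1 : forall x, Rmin s c < x < Rmax s c -> f1 x = glue c f1 f2 x).
  { rewrite Rmin_left, Rmax_right by lra. intros x hx.
    unfold glue. destruct (Rlt_dec x c); [reflexivity | lra]. }
  assert (E2 : forall x, Rmin c t < x < Rmax c t -> f2 x = glue c f1 f2 x).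
  { rewrite Rmin_left, Rmax_right by lra. intros x hx.
    unfold glue. destruct (Rlt_dec x c); [lra | reflexivity]. }
  pose proof (ex_RInt_ext _ _ _ _ E1 ex1) as ex1'.
  pose proof (ex_RInt_ext _ _ _ _ E2 ex2) as ex2'.
  split; [exact (ex_RInt_Chasles _ _ _ _ ex1' ex2')|].
  rewrite <- (RInt_Chasles_R _ _ _ _ ex1' ex2'), <- (RInt_ext _ _ _ _ E1),
    <- (RInt_ext _ _ _ _ E2).
  reflexivity.
Qed.

Lemma sandwiched_point (g : R -> R) (s : R) : sandwiched g s s 0.
Proof.
  exists g, g. split; [apply ex_RInt_point | split; [apply ex_RInt_point | split]].
  - intros x hx. lra.
  - lra.
Qed.

Lemma sandwiched_concat (g : R -> R) (s c t e1 e2 : R) : s <= c -> c <= t ->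
  sandwiched g s c e1 -> sandwiched g c t e2 -> sandwiched g s t (e1 + e2).
Proof.
  intros hsc hct [l1 [h1 [exl1 [exh1 [B1 G1]]]]] [l2 [h2 [exl2 [exh2 [B2 G2]]]]].
  destruct (RInt_glue l1 l2 s c t hsc hct exl1 exl2) as [exl El].
  destruct (RInt_glue h1 h2 s c t hsc hct exh1 exh2) as [exh Eh].
  exists (glue c l1 l2), (glue c h1 h2).
  split; [exact exl | split; [exact exh | split]].
  - intros x hx. unfold glue. destruct (Rlt_dec x c); [apply B1 | apply B2]; lra.
  - rewrite El, Eh. lra.
Qed.

Lemma sandwiched_weaken (g : R -> R) (s t e e' : R) :
  e <= e' -> sandwiched g s t e -> sandwiched g s t e'.
Proof.
  intros hee' [l [h [exl [exh [B G]]]]]. exists l, h. repeat (split; auto). lra.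
Qed.

Lemma sandwiched_monotone_mul (m w : R -> R) (a b W : R) :
  a <= b -> nondecreasing_on m a b -> ex_RInt w a b ->
  (forall x, a <= x <= b -> 0 <= w x <= W) ->
  sandwiched (fun x => m x * w x) a b ((m b - m a) * W * (b - a)).
Proof.
  intros hab hm exw hw.
  exists (fun x => m a * w x), (fun x => m b * w x).
  split; [exact (ex_RInt_scal w a b (m a) exw) |].
  split; [exact (ex_RInt_scal w a b (m b) exw) | split].
  { intros x hx. destruct (hw x hx).
    split; apply Rmult_le_compat_r; auto; apply hm; lra. }
  rewrite !RInt_mult_l by exact exw.
  assert (hIw : RInt w a b <= W * (b - a)).
  { pose proof (abs_RInt_le_const w a b W hab exw) as H.
    assert (Rabs (RInt w a b) <= (b - a) * W)
      by (apply H; intros x hx; rewrite Rabs_pos_eq; apply hw; lra).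
    pose proof (Rle_abs (RInt w a b)). lra. }
  assert (hmab : 0 <= m b - m a) by (pose proof (hm a b); lra).
  replace (m b * RInt w a b - m a * RInt w a b) with ((m b - m a) * RInt w a b) by ring.
  rewrite Rmult_assoc. apply Rmult_le_compat_l; assumption.
Qed.

Lemma ex_RInt_monotone_mul (m w : R -> R) (a b W : R) :
  a <= b -> nondecreasing_on m a b -> ex_RInt w a b ->
  (forall x, a <= x <= b -> 0 <= w x <= W) ->
  ex_RInt (fun x => m x * w x) a b.
Proof.
  intros hab hm exw hw.
  assert (hW : 0 <= W) by (destruct (hw a); lra).
  apply ex_RInt_sandwiched; [exact hab|]. intros eta heta.
  apply (Q_arbitrarily_small _ (sandwiched_point _) (sandwiched_concat _)
           (sandwiched_weaken _) m a b W); auto.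
  intros s t has hst htb.
  apply sandwiched_monotone_mul; [exact hst | apply (nondecreasing_on_sub m a b); auto | |].
  - apply (ex_RInt_Chasles_2 (V := R_CompleteNormedModule) _ a); [lra|].
    apply (ex_RInt_Chasles_1 (V := R_CompleteNormedModule) _ _ _ b); [lra | exact exw].
  - intros x hx. apply hw. lra.
Qed.

Lemma ex_RInt_monotone_mul_continuous (m w : R -> R) (a b : R) :
  a <= b -> nondecreasing_on m a b ->
  (forall x, a <= x <= b -> continuous w x /\ 0 <= w x) ->
  ex_RInt (fun x => m x * w x) a b.
Proof.
  intros hab hm hw.
  assert (exw : ex_RInt w a b).
  { apply (ex_RInt_continuous (V := R_CompleteNormedModule)).
    rewrite Rmin_left, Rmax_right by lra. intros x hx. apply hw, hx. }
  destruct (ex_RInt_ub w a b exw) as [W hW].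
  apply (ex_RInt_monotone_mul m w a b W); auto.
  intros x hx. split; [apply hw, hx|].
  apply Rle_trans with (Rabs (w x)); [apply Rle_abs|].
  apply hW. rewrite Rmin_left, Rmax_right; lra.
Qed.

(** * Change of variables for monotone integrands *)

Lemma eq_of_local_increment_bound (D m : R -> R) (a b K : R) :
  a <= b -> 0 <= K -> nondecreasing_on m a b ->
  (forall s t, a <= s -> s <= t -> t <= b ->
     Rabs (D t - D s) <= (m t - m s) * K * (t - s)) ->
  D b = D a.
Proof.
  intros hab hK hm hD.
  assert (small : forall eta, 0 < eta -> Rabs (D b - D a) <= eta).
  { intros eta heta.
    apply (Q_arbitrarily_small (fun s t e => Rabs (D t - D s) <= e)) with m K; auto.
    - intros s. rewrite Rminus_diag, Rabs_R0. lra.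
    - intros s c t e1 e2 _ _ H1 H2.
      replace (D t - D s) with ((D c - D s) + (D t - D c)) by ring.
      apply (Rle_trans _ _ _ (Rabs_triang _ _)). lra.
    - intros s t e e' hee' H. lra. }
  destruct (Req_dec (D b) (D a)) as [E | NE]; [exact E|].
  assert (hpos : 0 < Rabs (D b - D a)) by (apply Rabs_pos_lt; lra).
  specialize (small (Rabs (D b - D a) / 2) ltac:(lra)). lra.
Qed.

Lemma RInt_mul_weight_bounds (M w : R -> R) (s t al be : R) : s <= t ->
  ex_RInt (fun x => M x * w x) s t -> ex_RInt w s t ->
  (forall x, s < x < t -> 0 <= w x /\ al <= M x <= be) ->
  al * RInt w s t <= RInt (fun x => M x * w x) s t <= be * RInt w s t.
Proof.
  intros hst exMw exw hb. rewrite <- !RInt_mult_l by exact exw.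
  split; apply RInt_le; auto; try apply (ex_RInt_scal w s t _ exw);
    intros x hx; destruct (hb x hx) as [hw [hal hbe]];
    apply Rmult_le_compat_r; assumption.
Qed.

Section MonotoneChangeOfVariables.

Variables (f w phi dphi : R -> R) (a b : R).
Hypothesis hab : a <= b.
Hypothesis phi_derive : forall x, a <= x <= b -> is_derive phi x (dphi x) /\ continuous dphi x.
Hypothesis dphi_ge0 : forall x, a <= x <= b -> 0 <= dphi x.
Hypothesis phi_nondecr : nondecreasing_on phi a b.
Hypothesis w_cont : forall y, phi a <= y <= phi b -> continuous w y /\ 0 <= w y.
Hypothesis f_nondecr : nondecreasing_on f (phi a) (phi b).

Lemma phi_between (x : R) : a <= x <= b -> phi a <= phi x <= phi b.
Proof. intros hx. split; apply phi_nondecr; lra. Qed.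

Lemma pullback_weight_continuous (x : R) : a <= x <= b ->
  continuous (fun x => dphi x * w (phi x)) x /\ 0 <= dphi x * w (phi x).
Proof.
  intros hx. destruct (phi_derive x hx) as [hd hcd].
  destruct (w_cont (phi x) (phi_between x hx)) as [hcw hw].
  split; [|apply Rmult_le_pos; auto].
  apply (continuous_mult dphi (fun x => w (phi x))); [exact hcd|].
  apply continuous_comp; [|exact hcw].
  apply (ex_derive_continuous (K := R_AbsRing) (V := R_NormedModule) phi).
  exists (dphi x). exact hd.
Qed.

Lemma ex_RInt_pullback (s t : R) : a <= s -> s <= t -> t <= b ->
  ex_RInt (fun x => f (phi x) * (dphi x * w (phi x))) s t.
Proof.
  intros has hst htb.
  apply (ex_RInt_monotone_mul_continuous (fun x => f (phi x))); [exact hst | |].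
  - intros x y hx hxy hy. apply f_nondecr; try apply phi_between; try lra.
    apply phi_nondecr; lra.
  - intros x hx. apply pullback_weight_continuous. lra.
Qed.

Lemma ex_RInt_pushforward (s t : R) : phi a <= s -> s <= t -> t <= phi b ->
  ex_RInt (fun y => f y * w y) s t.
Proof.
  intros has hst htb.
  apply ex_RInt_monotone_mul_continuous; [exact hst | |].
  - apply (nondecreasing_on_sub f (phi a) (phi b)); assumption.
  - intros y hy. apply w_cont. lra.
Qed.

Lemma RInt_pullback_weight (s t : R) : a <= s -> s <= t -> t <= b ->
  RInt (fun x => dphi x * w (phi x)) s t = RInt w (phi s) (phi t).
Proof.
  intros has hst htb.
  apply (RInt_comp w phi dphi s t); rewrite Rmin_left, Rmax_right by lra;
    intros x hx; [apply w_cont, phi_between | apply phi_derive]; lra.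
Qed.

(* On [s, t] both integrals are averages of [f] against the same mass
   [L = int_(phi s)^(phi t) w], with [f] trapped between [f (phi s)] and [f (phi t)]. *)
Lemma RInt_pullback_increment (K s t : R) :
  (forall x, a <= x <= b -> dphi x * w (phi x) <= K) ->
  a <= s -> s <= t -> t <= b ->
  Rabs (RInt (fun y => f y * w y) (phi s) (phi t) -
        RInt (fun x => f (phi x) * (dphi x * w (phi x))) s t)
    <= (f (phi t) - f (phi s)) * K * (t - s).
Proof.
  intros hK has hst htb.
  destruct (phi_between s) as [hs1 hs2]; [lra|].
  destruct (phi_between t) as [ht1 ht2]; [lra|].
  assert (hphi : phi s <= phi t) by (apply phi_nondecr; lra).
  assert (exv : ex_RInt (fun x => dphi x * w (phi x)) s t).
  { apply (ex_RInt_continuous (V := R_CompleteNormedModule)).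
    rewrite Rmin_left, Rmax_right by lra.
    intros x hx. apply pullback_weight_continuous. lra. }
  assert (exw : ex_RInt w (phi s) (phi t)).
  { apply (ex_RInt_continuous (V := R_CompleteNormedModule)).
    rewrite Rmin_left, Rmax_right by lra.
    intros y hy. apply w_cont. lra. }
  set (L := RInt w (phi s) (phi t)).
  assert (hL : 0 <= L <= K * (t - s)).
  { unfold L. rewrite <- RInt_pullback_weight by assumption. split.
    - apply RInt_ge_0; auto. intros x hx. apply pullback_weight_continuous. lra.
    - apply Rle_trans with (Rabs (RInt (fun x => dphi x * w (phi x)) s t));
        [apply Rle_abs|].
      rewrite Rmult_comm. apply abs_RInt_le_const; auto. intros x hx.
      destruct (pullback_weight_continuous x) as [_ hv]; [lra|].
      rewrite Rabs_pos_eq by exact hv. apply hK. lra. }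
  assert (hX : f (phi s) * L <= RInt (fun y => f y * w y) (phi s) (phi t) <= f (phi t) * L).
  { apply RInt_mul_weight_bounds; auto.
    - apply ex_RInt_pushforward; assumption.
    - intros y hy. split; [apply w_cont; lra | split; apply f_nondecr; lra]. }
  assert (hY : f (phi s) * L <= RInt (fun x => f (phi x) * (dphi x * w (phi x))) s t
                 <= f (phi t) * L).
  { unfold L. rewrite <- RInt_pullback_weight by assumption.
    apply (RInt_mul_weight_bounds (fun x => f (phi x))); auto.
    - apply ex_RInt_pullback; assumption.
    - intros x hx. destruct (phi_between x) as [hx1 hx2]; [lra|].
      split; [apply pullback_weight_continuous; lra|].
      split; apply f_nondecr; try lra; apply phi_nondecr; lra. }
  assert (hf : 0 <= f (phi t) - f (phi s)) by (pose proof (f_nondecr (phi s) (phi t)); lra).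
  assert (hfL : (f (phi t) - f (phi s)) * L <= (f (phi t) - f (phi s)) * K * (t - s)).
  { rewrite Rmult_assoc. apply Rmult_le_compat_l; lra. }
  apply Rabs_le_between'. nra.
Qed.

Theorem RInt_comp_nondecreasing :
  RInt (fun y => f y * w y) (phi a) (phi b) =
  RInt (fun x => f (phi x) * (dphi x * w (phi x))) a b.
Proof.
  assert (exv : ex_RInt (fun x => dphi x * w (phi x)) a b).
  { apply (ex_RInt_continuous (V := R_CompleteNormedModule)).
    rewrite Rmin_left, Rmax_right by lra. apply pullback_weight_continuous. }
  destruct (ex_RInt_ub _ a b exv) as [K hK].
  assert (hK' : forall x, a <= x <= b -> dphi x * w (phi x) <= K).
  { intros x hx. apply Rle_trans with (Rabs (dphi x * w (phi x))); [apply Rle_abs|].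
    apply hK. rewrite Rmin_left, Rmax_right; lra. }
  set (D := fun x => RInt (fun y => f y * w y) (phi a) (phi x) -
                     RInt (fun x => f (phi x) * (dphi x * w (phi x))) a x).
  assert (hD : D b = D a).
  { apply eq_of_local_increment_bound with (m := fun x => f (phi x)) (K := K); auto.
    - apply Rle_trans with (dphi a * w (phi a)); [|apply hK'; lra].
      apply (pullback_weight_continuous a). lra.
    - intros x y hx hxy hy. apply f_nondecr; try apply phi_between; try lra.
      apply phi_nondecr; lra.
    - intros s t has hst htb.
      destruct (phi_between s) as [hs1 hs2]; [lra|].
      destruct (phi_between t) as [ht1 ht2]; [lra|].
      unfold D.
      rewrite <- (RInt_Chasles_R _ (phi a) (phi s) (phi t))
        by (apply ex_RInt_pushforward; try lra; apply phi_nondecr; lra).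
      rewrite <- (RInt_Chasles_R _ a s t) by (apply ex_RInt_pullback; lra).
      replace (_ + _ - (_ + _) - _) with
        (RInt (fun y => f y * w y) (phi s) (phi t) -
         RInt (fun x => f (phi x) * (dphi x * w (phi x))) s t) by ring.
      apply RInt_pullback_increment; assumption. }
  unfold D in hD. rewrite !RInt_point in hD. unfold zero in hD; simpl in hD. lra.
Qed.

End MonotoneChangeOfVariables.

(** * The transfer operator of the Farey map *)

Lemma continuous_Rinv_pos (y : R) : 0 < y -> continuous Rinv y.
Proof.
  intros hy. apply (ex_derive_continuous (K := R_AbsRing) (V := R_NormedModule) Rinv).
  auto_derive. lra.
Qed.

Lemma RInt_Rinv (s t : R) : 0 < s <= t -> RInt Rinv s t = ln t - ln s.
Proof.
  intros hst. apply is_RInt_unique.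
  apply (is_RInt_derive ln Rinv); rewrite Rmin_left, Rmax_right by lra; intros x hx.
  - auto_derive; [lra | field; lra].
  - apply continuous_Rinv_pos. lra.
Qed.

Lemma ex_RInt_mu_dens (f : R -> R) (s t : R) :
  0 < s <= t -> nondecreasing_on f s t -> ex_RInt (mu_dens f) s t.
Proof.
  intros hst hf. apply (ex_RInt_monotone_mul_continuous f Rinv); [lra | exact hf |].
  intros x hx. split; [apply continuous_Rinv_pos | left; apply Rinv_0_lt_compat]; lra.
Qed.

Lemma RInt_mu_dens_bounds (f : R -> R) (s t : R) :
  0 < s <= t -> nondecreasing_on f s t ->
  f s * (ln t - ln s) <= RInt (mu_dens f) s t <= f t * (ln t - ln s).
Proof.
  intros hst hf. rewrite <- RInt_Rinv by exact hst.
  apply (RInt_mul_weight_bounds f Rinv); [lra | apply ex_RInt_mu_dens; auto | |].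
  - apply (ex_RInt_continuous (V := R_CompleteNormedModule)).
    rewrite Rmin_left, Rmax_right by lra. intros x hx. apply continuous_Rinv_pos. lra.
  - intros x hx. split; [left; apply Rinv_0_lt_compat; lra | split; apply hf; lra].
Qed.

Lemma RInt_mu_dens_comp (f phi dphi : R -> R) (a b : R) : a <= b ->
  (forall x, a <= x <= b -> is_derive phi x (dphi x) /\ continuous dphi x) ->
  (forall x, a <= x <= b -> 0 <= dphi x) -> nondecreasing_on phi a b -> 0 < phi a -> nondecreasing_on f (phi a) (phi b) ->
  ex_RInt (fun x => f (phi x) * (dphi x / phi x)) a b /\
  RInt (mu_dens f) (phi a) (phi b) = RInt (fun x => f (phi x) * (dphi x / phi x)) a b.
Proof.
  intros hab hd hd0 hphi hpos hf.
  assert (hw : forall y, phi a <= y <= phi b -> continuous Rinv y /\ 0 <= / y).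
  { intros y hy. split; [apply continuous_Rinv_pos | left; apply Rinv_0_lt_compat]; lra. }
  split.
  - exact (ex_RInt_pullback f Rinv phi dphi a b hd hd0 hphi hw hf a b
             (Rle_refl a) hab (Rle_refl b)).
  - exact (RInt_comp_nondecreasing f Rinv phi dphi a b hab hd hd0 hphi hw hf).
Qed.

Lemma RInt_Fhat_left_branch (f : R -> R) (u : R) :
  0 < u <= 1 -> nondecreasing_on f 0 1 ->
  ex_RInt (fun x => f (x / (1 + x)) / (x * (1 + x))) u 1 /\
  RInt (fun x => f (x / (1 + x)) / (x * (1 + x))) u 1 = RInt (mu_dens f) (u / (1 + u)) (1 / 2).
Proof.
  intros hu hf.
  assert (hphi : forall x, 0 <= x -> x / (1 + x) = 1 - / (1 + x))
    by (intros; field; lra).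
  destruct (RInt_mu_dens_comp f (fun x => x / (1 + x)) (fun x => / ((1 + x) * (1 + x))) u 1)
    as [hex hI]; [lra | | | | | |].
  - intros x hx. split; [auto_derive; [lra | field; lra] |].
    apply (ex_derive_continuous (K := R_AbsRing) (V := R_NormedModule)). auto_derive. nra.
  - intros x hx. left. apply Rinv_0_lt_compat. nra.
  - intros x y hx hxy hy. rewrite !hphi by lra.
    assert (/ (1 + y) <= / (1 + x)) by (apply Rinv_le_contravar; lra). lra.
  - apply Rdiv_lt_0_compat; lra.
  - apply (nondecreasing_on_sub f 0 1); [apply Rdiv_le_0_compat; lra | | exact hf].
    rewrite hphi by lra. assert (0 < / (1 + 1)) by (apply Rinv_0_lt_compat; lra). lra.
  - assert (hint : forall x, Rmin u 1 < x < Rmax u 1 ->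
        f (x / (1 + x)) * (/ ((1 + x) * (1 + x)) / (x / (1 + x))) =
        f (x / (1 + x)) / (x * (1 + x))).
    { rewrite Rmin_left, Rmax_right by lra. intros x hx. field. lra. }
    replace (1 / 2) with (1 / (1 + 1)) by field.
    split; [exact (ex_RInt_ext _ _ _ _ hint hex) | rewrite hI; symmetry; exact (RInt_ext _ _ _ _ hint)].
Qed.

Lemma RInt_Fhat_right_branch (f : R -> R) (u : R) :
  0 < u <= 1 -> nondecreasing_on f 0 1 ->
  ex_RInt (fun x => f (1 / (1 + x)) / (1 + x)) u 1 /\
  RInt (fun x => f (1 / (1 + x)) / (1 + x)) u 1 = RInt (mu_dens f) (1 / 2) (1 / (1 + u)).
Proof.
  intros hu hf.
  assert (hpsi : forall x y, x <= y < 1 -> 1 / (1 - x) <= 1 / (1 - y)).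
  { intros x y hxy. unfold Rdiv. rewrite !Rmult_1_l. apply Rinv_le_contravar; lra. }
  (* the decreasing branch [x |-> 1 / (1 + x)] is handled through [z = - x] *)
  destruct (RInt_mu_dens_comp f (fun z => 1 / (1 - z)) (fun z => / ((1 - z) * (1 - z)))
              (- (1)) (- u)) as [hex hI]; [lra | | | | | |].
  - intros z hz. split; [auto_derive; [lra | field; lra] |].
    apply (ex_derive_continuous (K := R_AbsRing) (V := R_NormedModule)). auto_derive. nra.
  - intros z hz. left. apply Rinv_0_lt_compat. nra.
  - intros x y hx hxy hy. apply hpsi. lra.
  - apply Rdiv_lt_0_compat; lra.
  - apply (nondecreasing_on_sub f 0 1); [left; apply Rdiv_lt_0_compat; lra | | exact hf].
    unfold Rdiv. rewrite Rmult_1_l, <- Rinv_1. apply Rinv_le_contravar; lra.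
  - set (g := fun z => f (1 / (1 - z)) / (1 - z)).
    assert (hint : forall z, Rmin (- (1)) (- u) < z < Rmax (- (1)) (- u) ->
        f (1 / (1 - z)) * (/ ((1 - z) * (1 - z)) / (1 / (1 - z))) = g z).
    { rewrite Rmin_left, Rmax_right by lra. intros z hz. unfold g. field. lra. }
    assert (hg : forall x, g (- x) = f (1 / (1 + x)) / (1 + x)).
    { intros x. unfold g. replace (1 - - x) with (1 + x) by ring. reflexivity. }
    destruct (RInt_reflect g u 1 (ex_RInt_ext _ _ _ _ hint hex)) as [hexr hIr].
    replace (1 / 2) with (1 / (1 - - (1))) by field.
    replace (1 / (1 + u)) with (1 / (1 - - u)) by (f_equal; ring).
    split.
    + exact (ex_RInt_ext _ _ _ _ (fun x _ => hg x) hexr).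
    + rewrite hI, (RInt_ext _ _ _ _ hint), <- hIr.
      apply RInt_ext. intros x _. symmetry. apply hg.
Qed.

Lemma RInt_mu_dens_Fhat (f : R -> R) (u : R) :
  0 < u <= 1 -> nondecreasing_on f 0 1 ->
  ex_RInt (mu_dens (Fhat f)) u 1 /\
  RInt (mu_dens (Fhat f)) u 1 = RInt (mu_dens f) (u / (1 + u)) (1 / (1 + u)).
Proof.
  intros hu hf.
  destruct (RInt_Fhat_left_branch f u hu hf) as [exl Il].
  destruct (RInt_Fhat_right_branch f u hu hf) as [exr Ir].
  set (left_branch := fun x => f (x / (1 + x)) / (x * (1 + x))) in *.
  set (right_branch := fun x => f (1 / (1 + x)) / (1 + x)) in *.
  assert (hsplit : forall x, Rmin u 1 < x < Rmax u 1 ->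
      left_branch x + right_branch x = mu_dens (Fhat f) x).
  { rewrite Rmin_left, Rmax_right by lra. intros x hx.
    unfold left_branch, right_branch, mu_dens, Fhat. field. lra. }
  assert (exs : ex_RInt (fun x => left_branch x + right_branch x) u 1)
    by exact (ex_RInt_plus _ _ _ _ exl exr).
  assert (Is : RInt (fun x => left_branch x + right_branch x) u 1 =
               RInt left_branch u 1 + RInt right_branch u 1)
    by exact (RInt_plus _ _ _ _ exl exr).
  assert (hc : 0 < u / (1 + u) <= 1 / 2).
  { split; [apply Rdiv_lt_0_compat; lra|].
    apply Rmult_le_reg_r with (2 * (1 + u)); [lra|]. field_simplify; lra. }
  assert (hv : 1 / 2 <= 1 / (1 + u) <= 1).
  { unfold Rdiv. rewrite !Rmult_1_l. split.
    - apply Rinv_le_contravar; lra.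
    - rewrite <- Rinv_1. apply Rinv_le_contravar; lra. }
  split; [exact (ex_RInt_ext _ _ _ _ hsplit exs)|].
  rewrite <- (RInt_ext _ _ _ _ hsplit), Is, Il, Ir.
  apply RInt_Chasles_R; apply ex_RInt_mu_dens; try lra;
    apply (nondecreasing_on_sub f 0 1); lra || exact hf.
Qed.

Lemma RInt_mu_dens_sub_ge (f : R -> R) (c u v : R) :
  0 < c <= u -> u <= v <= 1 -> nondecreasing_on f 0 1 ->
  f v * (ln 1 - ln v) - f u * (ln u - ln c) <=
  RInt (mu_dens f) u 1 - RInt (mu_dens f) c v.
Proof.
  intros hcu huv hf.
  assert (hsub : forall s t, 0 <= s -> t <= 1 -> nondecreasing_on f s t)
    by (intros; apply (nondecreasing_on_sub f 0 1); auto).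
  replace (RInt (mu_dens f) u 1 - RInt (mu_dens f) c v)
    with (RInt (mu_dens f) v 1 - RInt (mu_dens f) c u).
  2:{ rewrite <- (RInt_Chasles_R _ c u v), <- (RInt_Chasles_R _ u v 1);
        try (apply ex_RInt_mu_dens; [lra | apply hsub; lra]). ring. }
  destruct (RInt_mu_dens_bounds f v 1) as [hv _]; [lra | apply hsub; lra |].
  destruct (RInt_mu_dens_bounds f c u) as [_ hc]; [lra | apply hsub; lra |].
  lra.
Qed.

Lemma nondecreasing_of_strictly_increasing_01 (f : R -> R) :
  strictly_increasing_01 f -> nondecreasing_on f 0 1.
Proof.
  intros hinc x y hx hxy hy. destruct (Req_dec x y) as [-> | hne]; [lra|].
  left. apply hinc; lra.
Qed.

Theorem mainTheorem4 (u : R) (f : R -> R)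
  (hu : 0 < u < 1 / 2) (hL1 : L1_mu f) (hinc : strictly_increasing_01 f) :
  exists (pr1 : Riemann_integrable (mu_dens f) u 1)
         (pr2 : Riemann_integrable (mu_dens (Fhat f)) u 1),
    RiemannInt pr2 < RiemannInt pr1 /\
    RiemannInt pr1 - RiemannInt pr2 >= (f (1 / (1 + u)) - f u) * ln (1 + u).
Proof.
  pose proof (nondecreasing_of_strictly_increasing_01 f hinc) as hf.
  set (c := u / (1 + u)). set (v := 1 / (1 + u)).
  assert (hc : 0 < c < u) by (split; unfold c; [apply Rdiv_lt_0_compat | apply Rlt_div_l]; nra).
  assert (hv : u < v <= 1) by (split; unfold v; [apply Rlt_div_r | apply Rle_div_l]; nra).
  destruct (RInt_mu_dens_Fhat f u ltac:(lra) hf) as [exF IF].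
  pose proof (ex_RInt_mu_dens f u 1 ltac:(lra)
                (nondecreasing_on_sub f 0 1 u 1 ltac:(lra) ltac:(lra) hf)) as exf.
  exists (ex_RInt_Reals_0 _ _ _ exf), (ex_RInt_Reals_0 _ _ _ exF).
  rewrite <- !RInt_Reals, IF. fold c v.
  pose proof (RInt_mu_dens_sub_ge f c u v ltac:(lra) ltac:(lra) hf) as hdiff.
  replace (ln 1 - ln v) with (ln (1 + u)) in hdiff
    by (unfold v; rewrite ln_1, ln_div, ln_1 by lra; ring).
  replace (ln u - ln c) with (ln (1 + u)) in hdiff
    by (unfold c; rewrite ln_div by lra; ring).
  assert (hfuv : f u < f v) by (apply hinc; lra).
  assert (hln : 0 < ln (1 + u)) by (rewrite <- ln_1; apply ln_increasing; lra).
  assert (0 < (f v - f u) * ln (1 + u)) by (apply Rmult_lt_0_compat; lra).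
  split; lra.
Qed.
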